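(* Let $n>1$ be an integer. There is no matrix $M\in\mathcal S^{n\times n}$ such that simultaneously: (A1) $M$ is distinguished and self-conjugate; (A2) the first row of $M$ is $[1,2,2,\dots,2]$; (A3) $c_i(M)=1$ for all $1\le i\le n$; (A4) every principal submatrix of $M$ of odd degree has a column whose sum of entries equals $1$.
   Context: $\mathcal S=\{0,1,2,3\}$ is the Klein four-group ($\mathbb Z_2$-vector space) with $x+x=0$, $1+2=3$, $1+3=2$, $2+3=1$. Conjugation is the linear involution $\overline{\cdot}$ of $\mathcal S$ with $\bar0=0,\bar1=1,\bar2=3,\bar3=2$. A square matrix $M$ over $\mathcal S$ is self-conjugate if $M^t=\overline M$ (entrywise conjugate), and distinguished if it has $1$ on the diagonal and $2$ or $3$ everywhere off the diagonal. $c_i(M)$ is the sum of the entries of the $i$-th column. A principal submatrix is one given by the same set of row and column indices. *)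

From HB Require Import structures.
From mathcomp Require Import all_boot all_algebra.
Set Implicit Arguments. Unset Strict Implicit. Unset Printing Implicit Defensive.

(* The Klein four-group S = {0,1,2,3} with x+x=0, 1+2=3, 1+3=2, 2+3=1. *)
Inductive S := S0 | S1 | S2 | S3.

Definition S_to_nat (x : S) : nat :=
  match x with S0 => 0 | S1 => 1 | S2 => 2 | S3 => 3 end.
Definition S_of_nat (n : nat) : S :=
  match n with 0 => S0 | 1 => S1 | 2 => S2 | _ => S3 end.
Lemma S_to_natK : cancel S_to_nat S_of_nat. Proof. by case. Qed.
HB.instance Definition _ := Equality.copy S (can_type S_to_natK).

Definition sadd (x y : S) : S :=
  match x, y with
  | S0, z | z, S0 => z
  | S1, S1 | S2, S2 | S3, S3 => S0
  | S1, S2 | S2, S1 => S3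
  | S1, S3 | S3, S1 => S2
  | S2, S3 | S3, S2 => S1
  end.

Definition sconj (x : S) : S :=
  match x with S0 => S0 | S1 => S1 | S2 => S3 | S3 => S2 end.

Definition self_conjugate n (M : 'M[S]_n) : Prop :=
  forall i j, M j i = sconj (M i j).

Definition distinguished n (M : 'M[S]_n) : Prop :=
  forall i j, if i == j then M i j = S1 else (M i j = S2 \/ M i j = S3).

(* sum of the entries of column j of the principal submatrix indexed by A *)
Definition colsum_in n (M : 'M[S]_n) (A : {set 'I_n}) (j : 'I_n) : S :=
  \big[sadd/S0]_(i in A) M i j.

Definition colsum n (M : 'M[S]_n) (j : 'I_n) : S := colsum_in M setT j.

From HB Require Import structures.
From mathcomp Require Import all_boot all_algebra.

Set Implicit Arguments.
Unset Strict Implicit.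
Unset Printing Implicit Defensive.

(* Read a distinguished self-conjugate matrix M as a tournament on the index
   set: i beats j when M i j = 2 (then M j i = 3, so exactly one of i, j beats
   the other).  The in-neighbourhood of v is the set of i with M i v = 2.

   - The map parity : S -> F_2 sending 1, 2 to 1 and 0, 3 to 0 is additive,
     so (A3) forces every in-neighbourhood to have even size.
   - A cyclic triangle has all three column sums 0, so (A4) applied to
     3-element index sets makes the tournament transitive; hence u in the
     in-neighbourhood of v implies in(u) + {u} is contained in in(v), and in
     particular #|in(u)| < #|in(v)|.
   - By (A2) vertex 0 beats everybody.  Take v <> 0 with smallest in-degree;
     in(v) contains 0 and has even size, so it contains some u <> 0, whose
     in-degree is smaller: contradiction. *)

Lemma saddA : associative sadd. Proof. by do 3!case. Qed.
Lemma saddC : commutative sadd. Proof. by do 2!case. Qed.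
Lemma sadd0 : left_id S0 sadd. Proof. by case. Qed.
HB.instance Definition _ := Monoid.isComLaw.Build S S0 sadd saddA saddC sadd0.

Definition parity (x : S) : bool := (x == S1) || (x == S2).

Lemma parity_sadd : {morph parity : x y / sadd x y >-> x (+) y}.
Proof. by case; case. Qed.

Lemma big_addb_card (I : finType) (A : {pred I}) (b : I -> bool) :
  \big[addb/false]_(i in A) b i = odd #|[set i in A | b i]|.
Proof.
rewrite -sum1_card (big_morph odd oddD (erefl (odd 0))).
rewrite [RHS](eq_bigl (fun i => (i \in A) && b i)) => [|i]; last by rewrite inE.
by rewrite big_mkcondr; apply: eq_bigr => i _; case: (b i).
Qed.

Lemma parity_colsum_in n (M : 'M[S]_n) (A : {set 'I_n}) (j : 'I_n) :
  parity (colsum_in M A j) = odd #|[set i in A | parity (M i j)]|.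
Proof. by rewrite /colsum_in (big_morph parity parity_sadd (erefl (parity S0))) big_addb_card. Qed.

Lemma even_card_other (T : finType) (X : {set T}) (x : T) :
  x \in X -> ~~ odd #|X| -> exists2 y, y \in X & y != x.
Proof.
move=> xX X_even.
have [y /andP[yX yx] | no_other] := pickP [pred y in X | y != x]; first by exists y.
suff X1 : X = [set x] by move: X_even; rewrite X1 cards1.
apply/setP=> y; rewrite in_set1; apply/idP/eqP => [yX | -> //].
by apply/eqP; move: (no_other y); rewrite /= yX /= => /negbFE.
Qed.

Definition in_nbhd n (M : 'M[S]_n) (v : 'I_n) : {set 'I_n} :=
  [set i | M i v == S2].

Section Tournament.

Variables (n : nat) (M : 'M[S]_n).
Hypothesis distM : distinguished M.
Hypothesis sconjM : self_conjugate M.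

Lemma diag_S1 (i : 'I_n) : M i i = S1.
Proof. by have := distM i i; rewrite eqxx. Qed.

Lemma offdiag_S2_S3 (i j : 'I_n) : i != j -> M i j = S2 \/ M i j = S3.
Proof. by move=> ij; have := distM i j; rewrite (negbTE ij). Qed.

Lemma S2_offdiag (i j : 'I_n) : M i j = S2 -> i != j.
Proof. by move=> Mij; apply/eqP=> eij; move: Mij; rewrite eij diag_S1. Qed.

(* (A3) makes every in-degree even: the diagonal contributes 1 to the parity
   of the column sum, and the off-diagonal entries 2 contribute the rest. *)
Lemma in_nbhd_even (v : 'I_n) : colsum M v = S1 -> ~~ odd #|in_nbhd M v|.
Proof.
move=> /(congr1 parity); rewrite parity_colsum_in.
have -> : [set i in setT | parity (M i v)] = v |: in_nbhd M v.
  apply/setP=> i; rewrite !inE.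
  have [-> | iv] := eqVneq i v; first by rewrite diag_S1.
  by case: (offdiag_S2_S3 iv) => ->.
by rewrite cardsU1 inE diag_S1 add1n oddS => ->.
Qed.

Lemma cyclic_triangle_colsum (u v w : 'I_n) :
  M u v = S2 -> M v w = S2 -> M w u = S2 ->
  forall j, j \in (u |: [set v; w]) -> colsum_in M (u |: [set v; w]) j = S0.
Proof.
move=> Muv Mvw Mwu j.
have Mvu : M v u = S3 by rewrite sconjM Muv.
have Mwv : M w v = S3 by rewrite sconjM Mvw.
have Muw : M u w = S3 by rewrite sconjM Mwu.
have u_notin : u \notin [set v; w].
  by rewrite !inE negb_or (S2_offdiag Muv) eq_sym (S2_offdiag Mwu).
have v_notin : v \notin [set w] by rewrite inE (S2_offdiag Mvw).
rewrite /colsum_in big_setU1 //= big_setU1 //= big_set1 !inE.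
by case/or3P=> /eqP ->; rewrite ?diag_S1 ?Muv ?Mvw ?Mwu ?Mvu ?Mwv ?Muw.
Qed.

Hypothesis odd_colsum1M :
  forall A : {set 'I_n}, odd #|A| -> exists2 j, j \in A & colsum_in M A j = S1.

(* (A4) on 3-element sets rules out cyclic triangles, so beating is
   transitive: if w beats u and u beats v, then w beats v. *)
Lemma in_nbhd_trans (u v w : 'I_n) :
  u \in in_nbhd M v -> w \in in_nbhd M u -> w \in in_nbhd M v.
Proof.
rewrite !inE => /eqP Muv /eqP Mwu; apply/eqP.
have wv : w != v by apply/eqP=> ewv; move: Mwu; rewrite ewv sconjM Muv.
case: (offdiag_S2_S3 wv) => // Mwv.
have Mvw : M v w = S2 by rewrite sconjM Mwv.
have triangle_odd : odd #|(u |: [set v; w])|.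
  rewrite cardsU1 cardsU1 cards1 !inE negb_or (S2_offdiag Muv) eq_sym (S2_offdiag Mwu).
  by rewrite (S2_offdiag Mvw).
have [j jA] := odd_colsum1M triangle_odd.
by rewrite (cyclic_triangle_colsum Muv Mvw Mwu jA).
Qed.

Lemma in_nbhd_card_lt (u v : 'I_n) :
  u \in in_nbhd M v -> #|in_nbhd M u| < #|in_nbhd M v|.
Proof.
move=> uv.
have u_notin : u \notin in_nbhd M u by rewrite inE diag_S1.
have -> : #|in_nbhd M u|.+1 = #|u |: in_nbhd M u| by rewrite cardsU1 u_notin.
apply: subset_leq_card.
apply/subsetP=> w; rewrite in_setU1 => /predU1P [-> // | wu].
exact: in_nbhd_trans uv wu.
Qed.

End Tournament.

Theorem mainTheorem4 (n : nat) : 1 < n ->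
  ~ exists M : 'M[S]_n,
      [/\ distinguished M /\ self_conjugate M,
          (forall i j : 'I_n, val i = 0 -> M i j = (if val j == 0 then S1 else S2)),
          (forall j : 'I_n, colsum M j = S1)
        & (forall A : {set 'I_n}, odd #|A| ->
             exists2 j, j \in A & colsum_in M A j = S1)].
Proof.
move=> n_gt1 [M [[distM sconjM] row0 colsums odd_colsum1]].
pose v0 : 'I_n := Ordinal (ltnW n_gt1).
have v0_beats j : j != v0 -> v0 \in in_nbhd M j.
  move=> jv0; rewrite inE row0 //.
  suff /negbTE -> : val j != 0 by [].
  by apply: contra jv0 => /eqP j0; apply/eqP/val_inj.
(* A vertex v <> v0 of minimal in-degree; its in-neighbourhood has even size
   and contains v0, hence another vertex u, of even smaller in-degree. *)
have [v vv0 v_min] :=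
  @arg_minnP _ (Ordinal n_gt1) (fun x : 'I_n => x != v0) (fun x => #|in_nbhd M x|) isT.
have [u uv uu0] := even_card_other (v0_beats v vv0) (in_nbhd_even distM (colsums v)).
by have := leq_trans (in_nbhd_card_lt distM sconjM odd_colsum1 uv) (v_min u uu0); rewrite ltnn.
Qed.
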